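(* Let $G_0$ be the group defined in the context. The commutator subgroup $G_0'$ consists exactly of those elements $g\in G_0$ that satisfy both of the following: - $g$, as a homeomorphism of $\mathbb{R}$, has compact support; - $g$ is represented by a word over the generating set $\{x_{\mathtt s}:\mathtt s\in 2^{<\mathbb{N}}\}\cup\{y_{\mathtt s}:\mathtt s \text{ non-constant}\}$ in which the total exponent of the $y$-generators is zero.
   Context: Let $2^{\mathbb{N}}$ be the set of infinite binary sequences and $2^{<\mathbb{N}}$ the set of finite ones. Define maps of $2^{\mathbb{N}}$ as follows. - $x$ is given by $x(\mathtt{00}\xi)=\mathtt{0}\xi$, $x(\mathtt{01}\xi)=\mathtt{10}\xi$, $x(\mathtt{1}\xi)=\mathtt{11}\xi$. - $y$ and $y^{-1}$ are defined recursively by $y(\mathtt{00}\xi)=\mathtt{0}y(\xi)$, $y(\mathtt{01}\xi)=\mathtt{10}y^{-1}(\xi)$, $y(\mathtt{1}\xi)=\mathtt{11}y(\xi)$, and $y^{-1}(\mathtt{0}\xi)=\mathtt{00}y^{-1}(\xi)$, $y^{-1}(\mathtt{10}\xi)=\mathtt{01}y(\xi)$, $y^{-1}(\mathtt{11}\xi)=\mathtt{1}y^{-1}(\xi)$. - For a finite sequence $\mathtt s$, $x_{\mathtt s}(\mathtt s\xi)=\mathtt s x(\xi)$, and $x_{\mathtt s}$ is the identity on sequences not beginning with $\mathtt s$. The map $y_{\mathtt s}$ is defined similarly. A finite sequence is constant if it is of the form $\mathtt0^n$ or $\mathtt1^n$. Define $\varphi(\mathtt0\xi)=1/(1+1/\varphi(\xi))$,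 $\varphi(\mathtt1\xi)=1+\varphi(\xi)$, $\Phi(\mathtt0\xi)=-\varphi(\tilde\xi)$ and $\Phi(\mathtt1\xi)=\varphi(\xi)$, where $\tilde\xi$ swaps $\mathtt0,\mathtt1$. Via $\Phi:2^{\mathbb N}\to\mathbb{R}$ these maps induce homeomorphisms of $\mathbb{R}$. Under this identification, $x,x_{\mathtt1},y_{\mathtt{10}}$ are the maps $a(t)=t+1$, $b$ and $c$, where - $b(t)=t$ for $t\le0$, $t/(1-t)$ on $[0,1/2]$, $(3t-1)/t$ on $[1/2,1]$, and $t+1$ for $t\ge1$; - $c(t)=2t/(t+1)$ on $[0,1]$ and $t$ otherwise. $G_0$ is the group generated by all $x_{\mathtt s}$ and all $y_{\mathtt s}$ with $\mathtt s$ non-constant; it equals the group generated by $a,b,c$. *)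

From HB Require Import structures.
From mathcomp Require Import all_boot all_order all_algebra.
From mathcomp Require Import boolp classical_sets reals ereal Rstruct.
Set Implicit Arguments. Unset Strict Implicit. Unset Printing Implicit Defensive.
Import Order.TTheory GRing.Theory Num.Theory.

Definition Cantor := nat -> bool.

Definition shift (k : nat) (xi : Cantor) : Cantor := fun n => xi (k + n).

Definition map_eq (f g : Cantor -> Cantor) : Prop := forall xi n, f xi n = g xi n.

Definition xmap (xi : Cantor) : Cantor :=
  if xi 0 then (* 1ξ -> 11ξ *) (fun n => if n is m.+1 then xi m else true)
  else if xi 1 then (* 01ξ -> 10ξ *)
    (fun n => match n with 0 => true | 1 => false | _ => xi n end)
  else (* 00ξ -> 0ξ *) (fun n => if n is m.+1 then xi m.+2 else false).

Definition xinv (xi : Cantor) : Cantor :=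
  if ~~ xi 0 then (* 0ξ -> 00ξ *) (fun n => if n is m.+1 then xi m else false)
  else if xi 1 then (* 11ξ -> 1ξ *) (fun n => if n is m.+1 then xi m.+2 else true)
  else (* 10ξ -> 01ξ *)
    (fun n => match n with 0 => false | 1 => true | _ => xi n end).

(* y and y^{-1}, defined by their mutual recursion; [inv = false] is y,
   [inv = true] is y^{-1}.  Every recursive step emits at least one output
   letter, so [fuel = n.+1] suffices to compute output letter n. *)
Fixpoint yout (fuel : nat) (inv : bool) (xi : Cantor) (n : nat) : bool :=
  match fuel with
  | 0 => false
  | f.+1 =>
    if ~~ inv then
      if xi 0 then (* y(1ξ) = 11 y(ξ) *)
        match n with 0 | 1 => true | m.+2 => yout f false (shift 1 xi) m end
      else if xi 1 then (* y(01ξ) = 10 y^{-1}(ξ) *)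
        match n with 0 => true | 1 => false | m.+2 => yout f true (shift 2 xi) m end
      else (* y(00ξ) = 0 y(ξ) *)
        match n with 0 => false | m.+1 => yout f false (shift 2 xi) m end
    else
      if ~~ xi 0 then (* y^{-1}(0ξ) = 00 y^{-1}(ξ) *)
        match n with 0 | 1 => false | m.+2 => yout f true (shift 1 xi) m end
      else if xi 1 then (* y^{-1}(11ξ) = 1 y^{-1}(ξ) *)
        match n with 0 => true | m.+1 => yout f true (shift 2 xi) m end
      else (* y^{-1}(10ξ) = 01 y(ξ) *)
        match n with 0 => false | 1 => true | m.+2 => yout f false (shift 2 xi) m end
  end.

Definition ymap (xi : Cantor) : Cantor := fun n => yout n.+1 false xi n.
Definition yinv (xi : Cantor) : Cantor := fun n => yout n.+1 true xi n.

Definition has_prefix (s : seq bool) (xi : Cantor) : bool :=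
  all (fun i => xi i == nth false s i) (iota 0 (size s)).

Definition localize (s : seq bool) (f : Cantor -> Cantor) (xi : Cantor) : Cantor :=
  if has_prefix s xi then
    (fun n => if n < size s then xi n else f (shift (size s) xi) (n - size s))
  else xi.

Definition constant_word (s : seq bool) : Prop :=
  exists n, s = nseq n false \/ s = nseq n true.

Inductive gen := GX of seq bool | GY of seq bool.

(* a letter is a generator together with an exponent flag: true = inverse *)
Definition letter := (gen * bool)%type.
Definition word := seq letter.

Definition letter_map (l : letter) : Cantor -> Cantor :=
  match l with
  | (GX s, false) => localize s xmap
  | (GX s, true)  => localize s xinv
  | (GY s, false) => localize s ymap
  | (GY s, true)  => localize s yinv
  end.

Definition letter_ok (l : letter) : Prop :=
  match l.1 with GX _ => True | GY s => ~ constant_word s end.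

Definition word_ok (w : word) : Prop := forall l, List.In l w -> letter_ok l.

(* the map represented by a word: w = l1 l2 ... lk  evaluates to l1 ∘ l2 ∘ ... ∘ lk *)
Definition word_eval (w : word) : Cantor -> Cantor :=
  foldr (fun l f => letter_map l \o f) id w.

Definition word_inv (w : word) : word := rev [seq (l.1, ~~ l.2) | l <- w].

Definition y_exponent (w : word) : int :=
  \sum_(l <- w) (match l with (GY _, false) => 1 | (GY _, true) => -1 | _ => 0 end)%R.

Definition inG0 (g : Cantor -> Cantor) : Prop :=
  exists w, word_ok w /\ map_eq (word_eval w) g.

Definition comm_word (u v : word) : word := word_inv u ++ word_inv v ++ u ++ v.

(* G_0': the subgroup generated by the commutators of elements of G_0, i.e.
   the finite products of commutators (inverses of commutators are commutators). *)
Definition inG0' (g : Cantor -> Cantor) : Prop :=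
  exists ps : seq (word * word),
    (forall p, List.In p ps -> word_ok p.1 /\ word_ok p.2) /\
    map_eq (word_eval (flatten [seq comm_word p.1 p.2 | p <- ps])) g.

Local Open Scope ring_scope.
Notation R := Rdefinitions.R.

(* The prefix ξ_0 ... ξ_{n-1} gives the Möbius map
   f_{ξ_0} ∘ ... ∘ f_{ξ_{n-1}}, with f_1(t) = 1 + t and f_0(t) = 1/(1+1/t),
   whose matrix is M_{ξ_0} ... M_{ξ_{n-1}}, M_1 = [[1,1],[0,1]],
   M_0 = [[1,0],[1,1]].  We keep its entries (a,b,c,d). *)
Fixpoint mob (n : nat) (xi : Cantor) : nat * nat * nat * nat :=
  match n with
  | 0 => (1, 0, 0, 1)%N
  | m.+1 => let: (a, b, c, d) := mob m xi in
            if xi m then (a, a + b, c, c + d)%N else (a + b, b, c + d, d)%N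
  end.

(* f_{ξ_0..ξ_{n-1}}(0) = b/d (note d >= 1) *)
Definition phi_approx (n : nat) (xi : Cantor) : R :=
  let: (_, b, _, d) := mob n xi in (b%:R / d%:R).

(* φ(ξ) = lim_n f_{ξ|n}(0) = sup_n f_{ξ|n}(0) (an increasing sequence), i.e. the
   solution of φ(0ξ) = 1/(1+1/φ(ξ)), φ(1ξ) = 1+φ(ξ); φ(1^∞) = +∞. *)
Definition phi (xi : Cantor) : \bar R :=
  ereal_sup [set (phi_approx n xi)%:E | n in [set: nat]].

Definition Phi (xi : Cantor) : \bar R :=
  if xi 0 then phi (shift 1 xi) else (- phi (fun n => ~~ xi n.+1))%E.

(* g, as the homeomorphism of R induced via Phi (t = Phi ξ  ↦  Phi (g ξ)),
   has compact support: it is the identity outside some [-M, M]. *)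
Definition compact_support (g : Cantor -> Cantor) : Prop :=
  exists M : R, forall xi, (M%:E < `|Phi xi|)%E -> Phi (g xi) = Phi xi.

From HB Require Import structures.
From mathcomp Require Import all_boot all_order all_algebra.
From mathcomp Require Import boolp classical_sets reals ereal Rstruct.
From mathcomp Require Import zify.
Set Implicit Arguments. Unset Strict Implicit. Unset Printing Implicit Defensive.
Import Order.TTheory GRing.Theory Num.Theory.

(* Modulo G_0' every generator is congruent to a word in x_0, x_1 and y_01:
   localisations at prefixes that are conjugate under x are conjugate, so
   y_s ~ y_01, x_(0^k) ~ x_0 and x_(1^k) ~ x_1, while x = x_1 x_0 modulo G_0'
   and x_s lies in G_0' for non-constant s, both by the relation
   x^2 = x_1 x x_0.  A word in x_0, x_1, y_01 with vanishing exponent sums is a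
   product of commutators.  Finally, near +oo (sequences 1^N...) and -oo
   (sequences 0^N...) any element of G_0 shifts the initial run of 1's,
   resp. 0's, by the exponent sum of x_1, resp. minus that of x_0; hence an
   element has compact support iff both of these exponent sums vanish. *)

Definition prepend (s : seq bool) (xi : Cantor) : Cantor :=
  fun n => if n < size s then nth false s n else xi (n - size s).

Lemma prepend_nil xi : prepend [::] xi = xi.
Proof. by apply: funext => n; rewrite /prepend ltn0 subn0. Qed.

Lemma prepend_cat s t xi : prepend (s ++ t) xi = prepend s (prepend t xi).
Proof.
apply: funext => n; rewrite /prepend size_cat nth_cat.
case: (ltnP n (size s)) => h; first by rewrite (leq_trans h (leq_addr _ _)).
have -> : (n < size s + size t) = (n - size s < size t) by lia.
by rewrite subnDA.
Qed.

Lemma prepend_cons b s xi : prepend (b :: s) xi = prepend [:: b] (prepend s xi).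
Proof. exact: (prepend_cat [:: b]). Qed.

Lemma prepend_cons0 b s xi : prepend (b :: s) xi 0 = b.
Proof. by []. Qed.

Lemma prepend_consS b s xi m : prepend (b :: s) xi m.+1 = prepend s xi m.
Proof. by rewrite /prepend /= ltnS subSS. Qed.

Lemma prepend_nseq_add b m n xi :
  prepend (nseq (m + n) b) xi = prepend (nseq m b) (prepend (nseq n b) xi).
Proof. by rewrite nseqD prepend_cat. Qed.

Lemma shift_prepend s xi : shift (size s) (prepend s xi) = xi.
Proof.
apply: funext => n; rewrite /shift /prepend.
have -> : (size s + n < size s) = false by lia.
by rewrite addKn.
Qed.

Lemma prepend_inj s : injective (prepend s).
Proof. by move=> xi eta h; rewrite -(shift_prepend s xi) h shift_prepend. Qed.

Lemma prepend_shift1 xi : prepend [:: xi 0] (shift 1 xi) = xi.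
Proof. by apply: funext => -[|n] //; rewrite prepend_consS prepend_nil. Qed.

Lemma prepend_shift_const (xi : Cantor) k b :
  (forall i, i < k -> xi i = b) -> xi = prepend (nseq k b) (shift k xi).
Proof.
move=> h; apply: funext => n; rewrite /prepend size_nseq nth_nseq /shift.
by case: ltnP => hn; [rewrite h|rewrite subnKC].
Qed.

Lemma has_prefixP s xi :
  reflect (exists zeta, xi = prepend s zeta) (has_prefix s xi).
Proof.
apply: (iffP allP) => [h|[z ->] i].
  exists (shift (size s) xi); apply: funext => n; rewrite /prepend /shift.
  case: ltnP => hn; last by rewrite subnKC.
  by apply/eqP; apply: h; rewrite mem_iota.
by rewrite mem_iota add0n => /andP [_ hi]; rewrite /prepend hi.
Qed.

Lemma has_prefix_prepend s xi : has_prefix s (prepend s xi).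
Proof. by apply/has_prefixP; exists xi. Qed.

Lemma has_prefix_cat s t zeta :
  has_prefix (s ++ t) (prepend s zeta) = has_prefix t zeta.
Proof.
apply/has_prefixP/has_prefixP => [[th]|[th ->]]; last by exists th; rewrite prepend_cat.
by rewrite prepend_cat => /prepend_inj ->; exists th.
Qed.

Lemma has_prefix_catl s t xi : has_prefix (s ++ t) xi -> has_prefix s xi.
Proof. by move=> /has_prefixP [z ->]; rewrite prepend_cat has_prefix_prepend. Qed.

Lemma has_prefix_nseq b s n eta : ~~ b \in s -> size s <= n ->
  has_prefix s (prepend (nseq n b) eta) = false.
Proof.
move=> hin hs; apply/negP => /has_prefixP [z /(congr1 (fun x => x (index (~~ b) s)))].
have hi : index (~~ b) s < size s by rewrite index_mem.
rewrite /prepend size_nseq hi (leq_trans hi hs) nth_nseq (leq_trans hi hs) nth_index //.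
by case: (b).
Qed.

Lemma localize_prepend s f xi : localize s f (prepend s xi) = prepend s (f xi).
Proof.
rewrite /localize has_prefix_prepend shift_prepend; apply: funext => n.
by rewrite /prepend; case: ltnP.
Qed.

Lemma localize_out s f xi : ~~ has_prefix s xi -> localize s f xi = xi.
Proof. by rewrite /localize => /negbTE ->. Qed.

Lemma localize_cat r p f : localize (r ++ p) f = localize r (localize p f).
Proof.
apply: funext => xi.
have [/has_prefixP [z ->]|hr] := boolP (has_prefix r xi); last first.
  rewrite !localize_out //; apply: contra hr; exact: has_prefix_catl.
rewrite localize_prepend.
have [/has_prefixP [t ->]|hp] := boolP (has_prefix p z).
  by rewrite -prepend_cat !localize_prepend prepend_cat.
by rewrite !localize_out ?has_prefix_cat.
Qed.

Lemma localize_nil f : localize [::] f = f.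
Proof.
by apply: funext => xi; rewrite -{1}(prepend_nil xi) localize_prepend prepend_nil.
Qed.

Lemma localize_comp s f g : localize s (f \o g) = localize s f \o localize s g.
Proof.
apply: funext => xi /=.
have [/has_prefixP [z ->]|hr] := boolP (has_prefix s xi).
  by rewrite !localize_prepend.
by rewrite !localize_out.
Qed.

Lemma localize_id s : localize s id = id.
Proof.
apply: funext => xi.
have [/has_prefixP [z ->]|hr] := boolP (has_prefix s xi).
  by rewrite localize_prepend.
by rewrite localize_out.
Qed.

Lemma localizeK s f g : cancel g f -> cancel (localize s g) (localize s f).
Proof.
move=> gK xi; have fgK : f \o g = id := funext gK.
by rewrite -[LHS]/((localize s f \o localize s g) xi) -localize_comp fgK localize_id.
Qed.

Lemma prepend_cases_x xi : exists z,
  [\/ xi = prepend [:: true] z, xi = prepend [:: false; true] z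
    | xi = prepend [:: false; false] z].
Proof.
rewrite -(prepend_shift1 xi); case: (xi 0); first by eexists; constructor 1.
rewrite -(prepend_shift1 (shift 1 xi)) -prepend_cat.
by case: (shift 1 xi 0); eexists; [constructor 2|constructor 3].
Qed.

Lemma prepend_cases_xinv xi : exists z,
  [\/ xi = prepend [:: false] z, xi = prepend [:: true; true] z
    | xi = prepend [:: true; false] z].
Proof.
rewrite -(prepend_shift1 xi); case: (xi 0); last by eexists; constructor 1.
rewrite -(prepend_shift1 (shift 1 xi)) -prepend_cat.
by case: (shift 1 xi 0); eexists; [constructor 2|constructor 3].
Qed.

Ltac prepend_simpl := rewrite ?prepend_consS ?prepend_cons0 ?prepend_nil.

Lemma xmap_1 s z : xmap (prepend (true :: s) z) = prepend (true :: true :: s) z.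
Proof. by apply: funext => -[|m] //; prepend_simpl. Qed.

Lemma xmap_01 s z :
  xmap (prepend (false :: true :: s) z) = prepend (true :: false :: s) z.
Proof. by apply: funext => -[|[|m]] //; prepend_simpl. Qed.

Lemma xmap_00 s z : xmap (prepend (false :: false :: s) z) = prepend (false :: s) z.
Proof. by apply: funext => -[|m] //; prepend_simpl. Qed.

Lemma xinv_0 s z : xinv (prepend (false :: s) z) = prepend (false :: false :: s) z.
Proof. by apply: funext => -[|m] //; prepend_simpl. Qed.

Lemma xinv_11 s z : xinv (prepend (true :: true :: s) z) = prepend (true :: s) z.
Proof. by apply: funext => -[|m] //; prepend_simpl. Qed.

Lemma xinv_10 s z :
  xinv (prepend (true :: false :: s) z) = prepend (false :: true :: s) z.
Proof. by apply: funext => -[|[|m]] //; prepend_simpl. Qed.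

Lemma xmapK : cancel xmap xinv.
Proof.
move=> xi; have [z [->|->|->]] := prepend_cases_x xi.
- by rewrite xmap_1 xinv_11.
- by rewrite xmap_01 xinv_10.
- by rewrite xmap_00 xinv_0.
Qed.

Lemma xinvK : cancel xinv xmap.
Proof.
move=> xi; have [z [->|->|->]] := prepend_cases_xinv xi.
- by rewrite xinv_0 xmap_00.
- by rewrite xinv_11 xmap_1.
- by rewrite xinv_10 xmap_01.
Qed.

Lemma xmap_nseq b m z :
  xmap (prepend (nseq m.+2 b) z) = prepend (nseq (if b then m.+3 else m.+1) b) z.
Proof. by case: b; rewrite /= (xmap_1, xmap_00). Qed.

Lemma xinv_nseq b m z :
  xinv (prepend (nseq m.+2 b) z) = prepend (nseq (if b then m.+1 else m.+3) b) z.
Proof. by case: b; rewrite /= (xinv_11, xinv_0). Qed.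

Lemma yout_unfold f inv xi n : yout f.+1 inv xi n =
  if ~~ inv then
    if xi 0 then
      match n with 0 | 1 => true | m.+2 => yout f false (shift 1 xi) m end
    else if xi 1 then
      match n with 0 => true | 1 => false | m.+2 => yout f true (shift 2 xi) m end
    else
      match n with 0 => false | m.+1 => yout f false (shift 2 xi) m end
  else
    if ~~ xi 0 then
      match n with 0 | 1 => false | m.+2 => yout f true (shift 1 xi) m end
    else if xi 1 then
      match n with 0 => true | m.+1 => yout f true (shift 2 xi) m end
    else
      match n with 0 => false | 1 => true | m.+2 => yout f false (shift 2 xi) m end.
Proof. by []. Qed.

Lemma yout_fuel_succ f n inv xi : n < f -> yout f.+1 inv xi n = yout f inv xi n.
Proof.
elim: f n inv xi => [//|f IH] n inv xi hn; rewrite [LHS]yout_unfold [RHS]yout_unfold.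
by case: inv (xi 0) (xi 1) => -[] -[]; case: n hn => [|[|m]] hn;
  cbn -[yout shift] => //; rewrite IH //; lia.
Qed.

Lemma yout_fuel f n inv xi : n < f -> yout f inv xi n = yout n.+1 inv xi n.
Proof.
elim: f => [//|f IH] hn.
by case: (ltnP n f) => h; [rewrite yout_fuel_succ // IH|have -> : f = n by lia].
Qed.

Ltac y_unfold :=
  apply: funext => -[|[|m]]; rewrite /ymap /yinv yout_unfold; prepend_simpl;
  cbn -[yout shift prepend] => //;
  rewrite ?(shift_prepend [:: _]) ?(shift_prepend [:: _; _]); prepend_simpl;
  rewrite yout_fuel.

Lemma ymap_1 z : ymap (prepend [:: true] z) = prepend [:: true; true] (ymap z).
Proof. by y_unfold. Qed.

Lemma ymap_01 z : ymap (prepend [:: false; true] z) = prepend [:: true; false] (yinv z).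
Proof. by y_unfold. Qed.

Lemma ymap_00 z : ymap (prepend [:: false; false] z) = prepend [:: false] (ymap z).
Proof. by y_unfold. Qed.

Lemma yinv_0 z : yinv (prepend [:: false] z) = prepend [:: false; false] (yinv z).
Proof. by y_unfold. Qed.

Lemma yinv_11 z : yinv (prepend [:: true; true] z) = prepend [:: true] (yinv z).
Proof. by y_unfold. Qed.

Lemma yinv_10 z : yinv (prepend [:: true; false] z) = prepend [:: false; true] (ymap z).
Proof. by y_unfold. Qed.

Lemma ymap_yinv_bit n : forall xi, ymap (yinv xi) n = xi n /\ yinv (ymap xi) n = xi n.
Proof.
elim/ltn_ind: n => n IH xi; split.
- have [z [->|->|->]] := prepend_cases_xinv xi.
  + rewrite yinv_0 ymap_00; case: n IH => [|m] IH //; prepend_simpl.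
    by case: (IH m (ltnSn m) z).
  + rewrite yinv_11 ymap_1; case: n IH => [|[|m]] IH //; prepend_simpl.
    by case: (IH m (ltnW (ltnSn m.+1)) z).
  + rewrite yinv_10 ymap_01; case: n IH => [|[|m]] IH //; prepend_simpl.
    by case: (IH m (ltnW (ltnSn m.+1)) z).
- have [z [->|->|->]] := prepend_cases_x xi.
  + rewrite ymap_1 yinv_11; case: n IH => [|m] IH //; prepend_simpl.
    by case: (IH m (ltnSn m) z).
  + rewrite ymap_01 yinv_10; case: n IH => [|[|m]] IH //; prepend_simpl.
    by case: (IH m (ltnW (ltnSn m.+1)) z).
  + rewrite ymap_00 yinv_0; case: n IH => [|[|m]] IH //; prepend_simpl.
    by case: (IH m (ltnW (ltnSn m.+1)) z).
Qed.

Lemma ymapK : cancel ymap yinv.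
Proof. by move=> xi; apply: funext => n; case: (ymap_yinv_bit n xi). Qed.

Lemma yinvK : cancel yinv ymap.
Proof. by move=> xi; apply: funext => n; case: (ymap_yinv_bit n xi). Qed.

Definition inv_letter (l : letter) : letter := (l.1, ~~ l.2).

Lemma inv_letterK : involutive inv_letter.
Proof. by case=> a b; rewrite /inv_letter /= negbK. Qed.

Lemma letter_mapK l : cancel (letter_map l) (letter_map (inv_letter l)).
Proof.
case: l => [[s|s] [|]]; apply: localizeK;
  [exact: xinvK|exact: xmapK|exact: yinvK|exact: ymapK].
Qed.

Lemma word_eval_cat a b : word_eval (a ++ b) = word_eval a \o word_eval b.
Proof. by elim: a => [|l a IH] //=; rewrite IH. Qed.

Lemma word_eval_catE a b xi : word_eval (a ++ b) xi = word_eval a (word_eval b xi).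
Proof. by rewrite word_eval_cat. Qed.

Lemma word_eval_cons l w xi : word_eval (l :: w) xi = letter_map l (word_eval w xi).
Proof. by []. Qed.

Lemma word_eval1 l xi : word_eval [:: l] xi = letter_map l xi.
Proof. by []. Qed.

Lemma word_inv_cat a b : word_inv (a ++ b) = word_inv b ++ word_inv a.
Proof. by rewrite /word_inv map_cat rev_cat. Qed.

Lemma word_inv_cons l w : word_inv (l :: w) = word_inv w ++ [:: inv_letter l].
Proof. by rewrite /word_inv /= rev_cons cats1. Qed.

Lemma word_inv1 l : word_inv [:: l] = [:: inv_letter l].
Proof. by []. Qed.

Lemma word_invK : involutive word_inv.
Proof.
move=> w; rewrite /word_inv map_rev revK -map_comp -[RHS]map_id.
by apply: eq_map => -[a b] /=; rewrite negbK.
Qed.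

Lemma word_evalK w : cancel (word_eval w) (word_eval (word_inv w)).
Proof.
elim: w => [|l w IH] xi //.
by rewrite word_inv_cons word_eval_catE word_eval1 word_eval_cons letter_mapK IH.
Qed.

Lemma word_evalKV w : cancel (word_eval (word_inv w)) (word_eval w).
Proof. by rewrite -{2}(word_invK w); exact: word_evalK. Qed.

Lemma word_ok_cat a b : word_ok (a ++ b) <-> word_ok a /\ word_ok b.
Proof.
split => [h|[ha hb] l /List.in_app_iff [/ha|/hb] //].
by split=> l hl; apply: h; apply/List.in_app_iff; [left|right].
Qed.

Lemma word_ok_cons l w : word_ok (l :: w) <-> letter_ok l /\ word_ok w.
Proof.
rewrite -cat1s word_ok_cat; split=> -[h1 h2]; split=> //.
  by apply: h1; left.
by move=> l' [<-|].
Qed.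

Lemma word_ok1 l : letter_ok l -> word_ok [:: l].
Proof. by move=> h l' [<-|]. Qed.

Lemma word_ok_inv w : word_ok w -> word_ok (word_inv w).
Proof.
elim: w => [|l w IH]; first by move=> _ l [].
rewrite word_ok_cons word_inv_cons word_ok_cat => -[hl hw]; split; first exact: IH.
by apply: word_ok1; case: l hl.
Qed.

(** * The commutator subgroup *)

Definition comm_words (ps : seq (word * word)) : word :=
  flatten [seq comm_word p.1 p.2 | p <- ps].

Definition pairs_ok (ps : seq (word * word)) : Prop :=
  forall p, List.In p ps -> word_ok p.1 /\ word_ok p.2.

Definition in_comm_subgroup (f : Cantor -> Cantor) : Prop :=
  exists ps, pairs_ok ps /\ f = word_eval (comm_words ps).

Lemma map_eq_funext f g : map_eq f g -> f = g.
Proof. by move=> e; apply: funext => xi; apply: funext => n; exact: e. Qed.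

Lemma inG0'E g : inG0' g <-> in_comm_subgroup g.
Proof.
split=> -[ps [hps eg]]; exists ps; split=> //; last by rewrite eg.
exact: map_eq_funext.
Qed.

Lemma comm_words_cat a b : comm_words (a ++ b) = comm_words a ++ comm_words b.
Proof. by rewrite /comm_words map_cat flatten_cat. Qed.

Lemma pairs_ok_cat a b : pairs_ok (a ++ b) <-> pairs_ok a /\ pairs_ok b.
Proof.
split => [h|[ha hb] p /List.in_app_iff [/ha|/hb] //].
by split=> p hp; apply: h; apply/List.in_app_iff; [left|right].
Qed.

Lemma pairs_ok_cons p ps :
  pairs_ok (p :: ps) <-> (word_ok p.1 /\ word_ok p.2) /\ pairs_ok ps.
Proof.
rewrite -cat1s pairs_ok_cat; split=> -[h1 h2]; split=> //; first by apply: h1; left.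
by move=> q [<-|].
Qed.

Lemma comm_word_ok u v : word_ok u -> word_ok v -> word_ok (comm_word u v).
Proof.
move=> hu hv; have [hu' hv'] := (word_ok_inv hu, word_ok_inv hv).
by rewrite /comm_word !word_ok_cat.
Qed.

Lemma comm_words_ok ps : pairs_ok ps -> word_ok (comm_words ps).
Proof.
elim: ps => [|p ps IH]; first by move=> _ l [].
move=> /pairs_ok_cons [[hu hv] /IH hw].
by apply/word_ok_cat; split; first exact: comm_word_ok.
Qed.

Lemma comm_subgroup_id : in_comm_subgroup id.
Proof. by exists [::]. Qed.

Lemma comm_subgroup_comp f g :
  in_comm_subgroup f -> in_comm_subgroup g -> in_comm_subgroup (f \o g).
Proof.
move=> [a [ha ->]] [b [hb ->]]; exists (a ++ b).
by rewrite pairs_ok_cat comm_words_cat word_eval_cat.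
Qed.

Lemma comm_subgroup_comm u v :
  word_ok u -> word_ok v -> in_comm_subgroup (word_eval (comm_word u v)).
Proof.
by move=> hu hv; exists [:: (u, v)]; rewrite /comm_words /= cats0; split=> // p [<-|].
Qed.

Lemma word_inv_comm_words ps :
  word_inv (comm_words ps) = comm_words (rev [seq (p.2, p.1) | p <- ps]).
Proof.
elim: ps => [|p ps IH] //; rewrite /= rev_cons -cats1 comm_words_cat -IH.
by rewrite /comm_words /= cats0 word_inv_cat /comm_word !word_inv_cat !word_invK -!catA.
Qed.

Lemma comm_subgroup_inv f f' : in_comm_subgroup f -> cancel f' f -> in_comm_subgroup f'.
Proof.
move=> [ps [hps ef]] f'K; exists (rev [seq (p.2, p.1) | p <- ps]); split.
  elim: ps hps {ef} => [|p ps IH] // /pairs_ok_cons [[h1 h2] hps].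
  by rewrite /= rev_cons -cats1 pairs_ok_cat pairs_ok_cons; split; first exact: IH.
rewrite -word_inv_comm_words; apply: funext => xi.
by rewrite -[in RHS](f'K xi) ef word_evalK.
Qed.

Lemma comm_subgroup_conj h f : word_ok h -> in_comm_subgroup f ->
  in_comm_subgroup (word_eval h \o f \o word_eval (word_inv h)).
Proof.
move=> hh [ps [hps ->]]; elim: ps hps => [|[u v] ps IH] /=.
  move=> _; rewrite (_ : _ \o _ = id); first exact: comm_subgroup_id.
  by apply: funext; exact: word_evalKV.
move=> /pairs_ok_cons [[hu hv] /IH hrest].
pose cj w := h ++ w ++ word_inv h.
have hcj w : word_ok w -> word_ok (cj w).
  by move=> hw; rewrite /cj !word_ok_cat; have := word_ok_inv hh.
have := comm_subgroup_comp (comm_subgroup_comm (hcj u hu) (hcj v hv)) hrest.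
congr in_comm_subgroup; apply: funext => xi /=.
rewrite /comm_words /= -/(comm_words ps) /cj /comm_word !word_inv_cat !word_invK.
by rewrite -!catA !word_eval_catE !word_evalK.
Qed.

(** * Conjugacy of localisations *)

Definition nonconst (s : seq bool) : bool := (false \in s) && (true \in s).

Lemma nonconstP s : reflect (~ constant_word s) (nonconst s).
Proof.
apply: (iffP andP) => [[hf ht] [n [e|e]]|hs].
  by move: ht; rewrite e mem_nseq andbF.
  by move: hf; rewrite e mem_nseq andbF.
split; apply/negP => hn; apply: hs; exists (size s); [right|left];
  by apply/all_pred1P/allP => -[] // hb; rewrite hb in hn.
Qed.

Lemma nonconstE s : nonconst s = ~~ all (pred1 true) s && ~~ all (pred1 false) s.
Proof. by rewrite -!has_predC /nonconst -!has_pred1; congr andb; apply: eq_has => -[]. Qed.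

Lemma constant_nseq s : ~~ nonconst s -> exists b, s = nseq (size s) b.
Proof.
by rewrite nonconstE negb_and !negbK => /orP [] /all_pred1P e; eexists; exact: e.
Qed.

Lemma letter_ok_nonconst l : letter_ok l <-> (if l.1 is GY s then nonconst s else true).
Proof. by case: l => -[s|s] b /=; split=> // /nonconstP. Qed.

Definition loc_conj (p q : seq bool) : Prop := exists h, word_ok h /\
  forall f, word_eval h \o localize p f \o word_eval (word_inv h) = localize q f.

Lemma loc_conj_refl p : loc_conj p p.
Proof. by exists [::]; split=> [l []|f]; apply: funext. Qed.

Lemma loc_conj_sym p q : loc_conj p q -> loc_conj q p.
Proof.
move=> [h [hh e]]; exists (word_inv h); split=> [|f]; first exact: word_ok_inv.
by rewrite -e; apply: funext => xi /=; rewrite word_invK !word_evalK.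
Qed.

Lemma loc_conj_trans p q r : loc_conj p q -> loc_conj q r -> loc_conj p r.
Proof.
move=> [h1 [ok1 e1]] [h2 [ok2 e2]]; exists (h2 ++ h1); split=> [|f].
  exact/word_ok_cat.
by rewrite -e2 -e1; apply: funext => xi; rewrite /= word_inv_cat !word_eval_catE.
Qed.

Definition lift_letter (r : seq bool) (l : letter) : letter :=
  (match l.1 with GX s => GX (r ++ s) | GY s => GY (r ++ s) end, l.2).

Lemma letter_map_lift r l : letter_map (lift_letter r l) = localize r (letter_map l).
Proof. by case: l => [[s|s] [|]]; rewrite /= localize_cat. Qed.

Lemma word_eval_lift r w :
  word_eval (map (lift_letter r) w) = localize r (word_eval w).
Proof.
elim: w => [|l w IH]; first by rewrite localize_id.
apply: funext => xi; rewrite map_cons [LHS]word_eval_cons IH letter_map_lift.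
by rewrite -[RHS]/(localize r (letter_map l \o word_eval w) xi) localize_comp.
Qed.

Lemma loc_conj_lift r p q : loc_conj p q -> loc_conj (r ++ p) (r ++ q).
Proof.
move=> [h [hh e]]; exists (map (lift_letter r) h); split=> [l|f].
  move=> /List.in_map_iff [l' [<- /hh]]; rewrite !letter_ok_nonconst.
  by case: l' => -[s|s] b //=; rewrite /nonconst !mem_cat => /andP [-> ->]; rewrite !orbT.
have -> : word_inv (map (lift_letter r) h) = map (lift_letter r) (word_inv h).
  by rewrite /word_inv map_rev -!map_comp.
by rewrite !word_eval_lift !localize_cat -!localize_comp e.
Qed.

Lemma loc_conj_of_prepend h p q : word_ok h ->
  (forall xi, word_eval h (prepend p xi) = prepend q xi) -> loc_conj p q.
Proof.
move=> hh e; exists h; split=> // f; apply: funext => eta /=.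
have [/has_prefixP [z ->]|hq] := boolP (has_prefix q eta).
  by rewrite -[in LHS]e word_evalK !localize_prepend e.
rewrite (localize_out _ hq) localize_out ?word_evalKV //.
apply: contra hq => /has_prefixP [z ez].
by rewrite -(word_evalKV h eta) ez e has_prefix_prepend.
Qed.

Lemma loc_conj_by_x p q :
  (forall xi, xmap (prepend p xi) = prepend q xi) -> loc_conj p q.
Proof.
move=> e; apply: (loc_conj_of_prepend (h := [:: (GX [::], false)])) => [|xi].
  exact: word_ok1.
by rewrite word_eval1 /= localize_nil e.
Qed.

Lemma loc_conj_01_10 r : loc_conj (false :: true :: r) (true :: false :: r).
Proof. exact/loc_conj_by_x/xmap_01. Qed.

Lemma loc_conj_1_11 r : loc_conj (true :: r) (true :: true :: r).
Proof. exact/loc_conj_by_x/xmap_1. Qed.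

Lemma loc_conj_00_0 r : loc_conj (false :: false :: r) (false :: r).
Proof. exact/loc_conj_by_x/xmap_00. Qed.

Lemma loc_conj_nseq b k : loc_conj (nseq k.+1 b) [:: b].
Proof.
elim: k => [|k IH]; first exact: loc_conj_refl.
apply: loc_conj_trans IH; case: b.
  exact/loc_conj_sym/loc_conj_1_11.
exact: loc_conj_00_0.
Qed.

Lemma nonconst_cons_nseq a t : nonconst (a :: t) -> ~~ nonconst t ->
  exists k, t = nseq k.+1 (~~ a).
Proof.
move=> hs ht; have hna : ~~ a \in t.
  by move: hs; rewrite /nonconst !inE; case: a; rewrite /= ?andbT.
have ha : a \notin t.
  by apply: contra ht => hat; rewrite /nonconst; case: (a) hna hat => -> ->.
have et : t = nseq (size t) (~~ a).
  apply/all_pred1P/allP => b hb /=; apply: contraTT ha.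
  by case: (a) b hb => -[] hb //=; rewrite hb.
by case: (size t) et => [|k] et; [rewrite et in hna|exists k].
Qed.

Lemma loc_conj_nonconst s : nonconst s -> loc_conj s [:: false; true].
Proof.
elim: s => [//|a t IH] hs.
have [ht|ht] := boolP (nonconst t).
  apply: loc_conj_trans (loc_conj_lift [:: a] (IH ht)) _; case: a {hs}.
    apply: loc_conj_trans (loc_conj_sym (loc_conj_01_10 [:: true])) _.
    exact: (loc_conj_lift [:: false] (loc_conj_sym (loc_conj_1_11 [::]))).
  exact: loc_conj_00_0.
have [k ->] := nonconst_cons_nseq hs ht.
apply: loc_conj_trans (loc_conj_lift [:: a] (loc_conj_nseq (~~ a) k)) _.
by case: a {hs ht}; [exact/loc_conj_sym/loc_conj_01_10|exact: loc_conj_refl].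
Qed.

(** * Reduction modulo the commutator subgroup *)

Lemma localize1_in b s f z :
  localize [:: b] f (prepend (b :: s) z) = prepend [:: b] (f (prepend s z)).
Proof. by rewrite prepend_cons localize_prepend. Qed.

Lemma localize1_out b c s f z : b != c ->
  localize [:: b] f (prepend (c :: s) z) = prepend (c :: s) z.
Proof. by move=> hbc; rewrite localize_out // /has_prefix /= andbT eq_sym. Qed.

Lemma xmap_sq xi :
  xmap (xmap xi) = localize [:: true] xmap (xmap (localize [:: false] xmap xi)).
Proof.
have [z [->|->|->]] := prepend_cases_x xi;
  last (rewrite -(prepend_shift1 z) -prepend_cat; case: (z 0));
  do ?[rewrite localize1_in | rewrite localize1_out // | rewrite xmap_1
     | rewrite xmap_01 | rewrite xmap_00 | rewrite prepend_nil
     | rewrite -prepend_cons] => //.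
Qed.

Definition eqmod_comm (f g : Cantor -> Cantor) : Prop :=
  exists c, in_comm_subgroup c /\ f = g \o c.

Lemma eqmod_comm_refl f : eqmod_comm f f.
Proof. by exists id; split; [exact: comm_subgroup_id|apply: funext]. Qed.

Lemma eqmod_comm_comp f1 g1 f2 w2 : word_ok w2 ->
  eqmod_comm f1 g1 -> eqmod_comm f2 (word_eval w2) ->
  eqmod_comm (f1 \o f2) (g1 \o word_eval w2).
Proof.
move=> hw [c1 [hc1 ->]] [c2 [hc2 ->]].
exists ((word_eval (word_inv w2) \o c1 \o word_eval w2) \o c2); split.
  by apply: comm_subgroup_comp hc2; rewrite -{2}(word_invK w2);
    apply: comm_subgroup_conj; first exact: word_ok_inv.
by apply: funext => xi /=; rewrite word_evalKV.
Qed.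

Lemma eqmod_comm_conj u h : word_ok u -> word_ok h ->
  eqmod_comm (word_eval h \o word_eval u \o word_eval (word_inv h)) (word_eval u).
Proof.
move=> hu hh; exists (word_eval (comm_word u (word_inv h))); split.
  exact/comm_subgroup_comm/word_ok_inv.
apply: funext => xi /=.
by rewrite /comm_word word_invK !word_eval_catE word_evalKV.
Qed.

Lemma eqmod_comm_loc_conj p q u F : loc_conj p q -> word_ok u ->
  word_eval u = localize p F -> eqmod_comm (localize q F) (word_eval u).
Proof. by move=> [h [hh <-]] hu eu; rewrite -eu; exact: eqmod_comm_conj. Qed.

Lemma comm_subgroup_invertible c : in_comm_subgroup c ->
  exists c', in_comm_subgroup c' /\ cancel c c' /\ cancel c' c.
Proof.
move=> hc; have [ps [_ ec]] := hc.
exists (word_eval (word_inv (comm_words ps))); rewrite ec; split.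
  by apply: comm_subgroup_inv hc _; rewrite ec; exact: word_evalKV.
by split; [exact: word_evalK|exact: word_evalKV].
Qed.

(* Localising [x^2 = x_1 x x_0] at [s] gives [X^2 = X_(s1) X X_(s0)] with
   [X = x_s]; as [s0] and [s1] are conjugate prefixes to [s],
   [X_(si) = X c_i] with [c_i] in G_0', whence [X = X^-1 c_1^-1 X c_0^-1]. *)
Lemma comm_subgroup_x_nonconst s : nonconst s -> in_comm_subgroup (localize s xmap).
Proof.
move=> hs; set X := localize s xmap.
have hu : word_ok [:: (GX s, false)] by exact: word_ok1.
have hX b : eqmod_comm (localize (s ++ [:: b]) xmap) X.
  apply: (eqmod_comm_loc_conj _ hu) => //; apply: loc_conj_trans (loc_conj_nonconst hs) _.
  apply/loc_conj_sym/loc_conj_nonconst.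
  by move: hs; rewrite /nonconst !mem_cat => /andP [-> ->].
have [[c0 [hc0 e0]] [c1 [hc1 e1]]] := (hX false, hX true).
have XK : cancel X (localize s xinv) := localizeK s xmapK.
have eX xi : X xi = c1 (X (X (c0 xi))).
  have sq : localize s (xmap \o xmap) =
      localize s (localize [:: true] xmap \o xmap \o localize [:: false] xmap).
    by congr localize; apply: funext => eta; exact: xmap_sq.
  rewrite !localize_comp -!localize_cat -/X e0 e1 in sq.
  by have := congr1 (fun f => localize s xinv (f xi)) sq; rewrite /= !XK.
have [c0' [hc0' [_ c0K']]] := comm_subgroup_invertible hc0.
have [c1' [hc1' [c1K _]]] := comm_subgroup_invertible hc1.
have -> : X = word_eval [:: (GX s, true)] \o c1' \o word_eval [:: (GX s, false)] \o c0'.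
  by apply: funext => xi; rewrite /= -/X [X (c0' _)]eX c0K' c1K XK.
apply: comm_subgroup_comp hc0'.
by apply: (comm_subgroup_conj (h := [:: (GX s, true)])) => //; exact: word_ok1.
Qed.

Definition x0_letter : letter := (GX [:: false], false).
Definition x1_letter : letter := (GX [:: true], false).
Definition y01_letter : letter := (GY [:: false; true], false).

(* The class of a generator modulo G_0', as a word in [x_0], [x_1], [y_01]. *)
Definition abel_rep (g : gen) : word :=
  match g with
  | GX s => (if all (pred1 true) s then [:: x1_letter] else [::]) ++
            (if all (pred1 false) s then [:: x0_letter] else [::])
  | GY _ => [:: y01_letter]
  end.

Definition abel_letter (l : letter) : word :=
  if l.2 then word_inv (abel_rep l.1) else abel_rep l.1.

Definition abel_word (w : word) : word := flatten (map abel_letter w).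

Lemma abel_rep_ok g : word_ok (abel_rep g).
Proof.
case: g => s; last by apply: word_ok1; apply/nonconstP.
by apply/word_ok_cat; split; case: ifP => _; by [exact: word_ok1|move=> l []].
Qed.

Lemma abel_word_ok w : word_ok (abel_word w).
Proof.
elim: w => [|l w IH]; first by move=> l [].
apply/word_ok_cat; split=> //; rewrite /abel_letter.
by case: ifP => _; [apply: word_ok_inv|]; exact: abel_rep_ok.
Qed.

Lemma eqmod_comm_inv u v : word_ok v ->
  eqmod_comm (word_eval u) (word_eval v) ->
  eqmod_comm (word_eval (word_inv u)) (word_eval (word_inv v)).
Proof.
move=> hv [c [hc ec]]; have [c' [hc' [_ cK']]] := comm_subgroup_invertible hc.
exists (word_eval v \o c' \o word_eval (word_inv v)); split.
  exact: comm_subgroup_conj.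
apply: funext => xi /=; rewrite word_evalK.
by apply: (can_inj (word_evalK u)); rewrite word_evalKV ec /= cK' word_evalKV.
Qed.

Lemma eqmod_comm_x : eqmod_comm xmap (word_eval [:: x1_letter; x0_letter]).
Proof.
exists (word_eval (comm_word [:: x0_letter] [:: (GX [::], true)])); split.
  by apply: comm_subgroup_comm; exact: word_ok1.
apply: funext => xi /=; rewrite !localize_nil (localizeK [:: false] xinvK).
by rewrite -xmap_sq xinvK.
Qed.

Lemma eqmod_comm_letter_pos g : letter_ok (g, false) ->
  eqmod_comm (letter_map (g, false)) (word_eval (abel_rep g)).
Proof.
case: g => s /letter_ok_nonconst /= hok; last first.
  apply: (eqmod_comm_loc_conj (u := [:: y01_letter])).
  - exact/loc_conj_sym/loc_conj_nonconst.
  - by apply: word_ok1; apply/nonconstP; rewrite /nonconst.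
  - by apply: funext.
have [hs|/constant_nseq [b ->]] := boolP (nonconst s).
  exists (localize s xmap); split; first exact: comm_subgroup_x_nonconst.
  by move: hs; rewrite nonconstE /abel_rep => /andP [/negbTE -> /negbTE ->]; apply: funext.
case: (size s) => [|k]; first by rewrite localize_nil; exact: eqmod_comm_x.
rewrite /abel_rep !all_nseq /=.
apply: (eqmod_comm_loc_conj (p := [:: b])) (loc_conj_sym (loc_conj_nseq b k)) _ _.
- by case: b; exact: word_ok1.
- by case: b; apply: funext.
Qed.

Lemma eqmod_comm_letter l : letter_ok l ->
  eqmod_comm (letter_map l) (word_eval (abel_letter l)).
Proof.
case: l => g [] hok; last exact: eqmod_comm_letter_pos.
have hpos : eqmod_comm (word_eval [:: (g, false)]) (word_eval (abel_rep g)).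
  by have := eqmod_comm_letter_pos (g := g) hok; congr eqmod_comm; apply: funext.
by have := eqmod_comm_inv (@abel_rep_ok g) hpos; congr eqmod_comm; apply: funext.
Qed.

Lemma eqmod_comm_abel_word w : word_ok w ->
  eqmod_comm (word_eval w) (word_eval (abel_word w)).
Proof.
elim: w => [|l w IH]; first by move=> _; exact: eqmod_comm_refl.
move=> /word_ok_cons [hl hw]; rewrite /abel_word /= -/(abel_word w) word_eval_cat.
exact: eqmod_comm_comp (@abel_word_ok w) (eqmod_comm_letter hl) (IH hw).
Qed.

(** * Exponent sums *)

Definition gen_code (g : gen) : bool * seq bool :=
  match g with GX s => (false, s) | GY s => (true, s) end.

Definition gen_decode (c : bool * seq bool) : gen := if c.1 then GY c.2 else GX c.2.

Lemma gen_codeK : cancel gen_code gen_decode.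
Proof. by case. Qed.

HB.instance Definition _ := Equality.copy gen (can_type gen_codeK).

Section ExponentSums.
Local Open Scope ring_scope.

Definition exponent_sum (g : gen) (w : word) : int :=
  \sum_(l <- w | l.1 == g) (-1) ^+ l.2.

Lemma exponent_sum_cat g a b :
  exponent_sum g (a ++ b) = exponent_sum g a + exponent_sum g b.
Proof. exact: big_cat. Qed.

Lemma exponent_sum_inv g w : exponent_sum g (word_inv w) = - exponent_sum g w.
Proof.
rewrite /exponent_sum /word_inv big_rev big_map -sumrN.
by apply: eq_bigr => -[g' []].
Qed.

Lemma exponent_sum_comm_words g ps : exponent_sum g (comm_words ps) = 0.
Proof.
elim: ps => [|p ps IH]; first by rewrite /exponent_sum big_nil.
rewrite /comm_words /= -/(comm_words ps) exponent_sum_cat IH /comm_word.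
by rewrite !exponent_sum_cat !exponent_sum_inv; lia.
Qed.

Lemma exponent_sum_no_inverse l w :
  inv_letter l \notin w -> exponent_sum l.1 (l :: w) != 0.
Proof.
move=> hl; rewrite /exponent_sum big_cons eqxx.
set S := \sum_(_ <- _ | _) _.
have hS : 0 <= (-1) ^+ l.2 * S.
  rewrite big_distrr big_seq_cond /=; apply: sumr_ge0 => -[g b] /andP [hin /eqP /= hg].
  have -> : b = l.2.
    apply: contraNeq hl => hb; rewrite /inv_letter -hg.
    by have -> : ~~ l.2 = b by case: (l.2) (b) hb => -[].
  by case: (l.2).
by case: (l.2) hS; rewrite /= ?expr0 ?expr1 ?mul1r ?mulN1r; lia.
Qed.

Lemma exponent_sum_cancel g l a b :
  exponent_sum g (l :: a ++ inv_letter l :: b) = exponent_sum g (a ++ b).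
Proof.
have hl : exponent_sum g [:: inv_letter l] = - exponent_sum g [:: l].
  by rewrite -exponent_sum_inv.
rewrite -cat1s -(cat1s (inv_letter l)) !exponent_sum_cat hl; lia.
Qed.

(* Cancel the first letter against an occurrence of its inverse, which exists
   since the exponent sum of its generator vanishes. *)
Lemma comm_subgroup_exponent_sums w : word_ok w ->
  (forall g, exponent_sum g w = 0) -> in_comm_subgroup (word_eval w).
Proof.
have [n] := ubnP (size w); elim: n w => // n IH [|l w'] hs hok hz.
  by rewrite (_ : word_eval _ = id) //; exact: comm_subgroup_id.
have /negPn hin : ~~ (inv_letter l \notin w').
  by apply/negP => /exponent_sum_no_inverse; rewrite hz eqxx.
case/splitPr: hin hok hs hz => a b.
move=> /word_ok_cons [hl /word_ok_cat [ha /word_ok_cons [hil hb]]] hs hz.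
have hab : in_comm_subgroup (word_eval (a ++ b)).
  apply: IH => [||g]; last by rewrite -(exponent_sum_cancel g l) hz.
    by move: hs; rewrite /= !size_cat /=; lia.
  exact/word_ok_cat.
have hC := comm_subgroup_conj (word_ok_inv hb) (comm_subgroup_comm ha (word_ok1 hil)).
have := comm_subgroup_comp hab hC; congr in_comm_subgroup; apply: funext => xi /=.
rewrite word_invK /comm_word !word_eval_catE !word_evalKV word_inv1 inv_letterK.
by rewrite !word_eval1 !word_eval_cons.
Qed.

Lemma abel_word_cat a b : abel_word (a ++ b) = abel_word a ++ abel_word b.
Proof. by rewrite /abel_word map_cat flatten_cat. Qed.

Lemma abel_word_inv w : abel_word (word_inv w) = word_inv (abel_word w).
Proof.
elim: w => [|l w IH] //; rewrite word_inv_cons abel_word_cat IH.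
rewrite /abel_word /= cats0 -/(abel_word w) word_inv_cat; congr (_ ++ _).
by case: l => g [] /=; rewrite ?word_invK.
Qed.

Lemma abel_word_comm_words ps :
  abel_word (comm_words ps) = comm_words [seq (abel_word p.1, abel_word p.2) | p <- ps].
Proof.
elim: ps => [|p ps IH] //.
rewrite /comm_words /= -!/(comm_words _) abel_word_cat IH.
by rewrite /comm_word !abel_word_cat !abel_word_inv.
Qed.

Lemma exponent_sum_abel_letter g l :
  exponent_sum g (abel_letter l) = (-1) ^+ l.2 * exponent_sum g (abel_rep l.1).
Proof. by case: l => g' [] /=; rewrite ?exponent_sum_inv ?mulN1r ?mul1r. Qed.

Lemma exponent_sum_abel_word g w :
  exponent_sum g (abel_word w) = \sum_(l <- w) (-1) ^+ l.2 * exponent_sum g (abel_rep l.1).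
Proof.
elim: w => [|l w IH]; first by rewrite /exponent_sum !big_nil.
by rewrite big_cons -IH -exponent_sum_abel_letter -exponent_sum_cat.
Qed.

Lemma exponent_sum_abel_rep_x b s :
  exponent_sum (GX [:: b]) (abel_rep (GX s)) = if all (pred1 b) s then 1 else 0.
Proof.
rewrite /abel_rep exponent_sum_cat.
by case: b; do 2 case: ifP => _; rewrite /exponent_sum ?big_cons ?big_nil //=.
Qed.

Lemma exponent_sum_abel_rep_y g :
  exponent_sum (GY [:: false; true]) (abel_rep g) = if g is GY _ then 1 else 0.
Proof.
case: g => s; rewrite /abel_rep ?exponent_sum_cat;
  by do ?case: ifP => _; rewrite /exponent_sum ?big_cons ?big_nil.
Qed.

Lemma exponent_sum_abel_rep_other g g' :
  g \notin [:: GX [:: false]; GX [:: true]; GY [:: false; true]] ->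
  exponent_sum g (abel_rep g') = 0.
Proof.
rewrite !inE => /norP [h0 /norP [h1 h2]].
case: g' => s; rewrite /abel_rep ?exponent_sum_cat;
  do ?case: ifP => _; rewrite /exponent_sum ?big_cons ?big_nil //=.
all: by rewrite ?(eq_sym _ g) ?(negbTE h0) ?(negbTE h1) ?(negbTE h2).
Qed.

Lemma y_exponent_abel_word w :
  y_exponent w = exponent_sum (GY [:: false; true]) (abel_word w).
Proof.
rewrite exponent_sum_abel_word /y_exponent; apply: eq_bigr => -[g b] _.
by rewrite exponent_sum_abel_rep_y; case: g; case: b.
Qed.

Definition x_exponent (b : bool) (w : word) : int := exponent_sum (GX [:: b]) (abel_word w).

Lemma comm_subgroup_abel_word w :
  (forall b, x_exponent b w = 0) -> y_exponent w = 0 ->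
  in_comm_subgroup (word_eval (abel_word w)).
Proof.
move=> hx hy; apply: comm_subgroup_exponent_sums (@abel_word_ok w) _ => g.
have [|hg] := boolP (g \in [:: GX [:: false]; GX [:: true]; GY [:: false; true]]).
  by rewrite !inE => /or3P [] /eqP ->; [exact: hx|exact: hx|rewrite -y_exponent_abel_word].
rewrite exponent_sum_abel_word big1 // => l _.
by rewrite exponent_sum_abel_rep_other ?mulr0.
Qed.

Lemma exponent_sum_abel_comm_words g ps : exponent_sum g (abel_word (comm_words ps)) = 0.
Proof. by rewrite abel_word_comm_words exponent_sum_comm_words. Qed.

End ExponentSums.

(** * Behaviour near the ends of the line *)

Lemma letter_map_localize l : exists F, letter_map l = localize (gen_code l.1).2 F.
Proof. by case: l => -[s|s] []; eexists. Qed.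

Lemma exponent_sum_abel_rep_out b g : ~~ b \in (gen_code g).2 ->
  exponent_sum (GX [:: b]) (abel_rep g) = 0.
Proof.
case: g => s /= hs.
  rewrite exponent_sum_abel_rep_x; case: allP => // /(_ _ hs) /=.
  by case: b {hs}.
by rewrite /abel_rep /exponent_sum big_cons big_nil.
Qed.

Lemma letter_germ b l : letter_ok l -> exists K q : nat,
  (q%:Z = K%:Z + (-1) ^+ (~~ b) * exponent_sum (GX [:: b]) (abel_letter l))%R /\
  forall m eta, letter_map l (prepend (nseq (K + m) b) eta) = prepend (nseq (q + m) b) eta.
Proof.
case: l => g e hl; rewrite exponent_sum_abel_letter.
have [F eF] := letter_map_localize (g, e).
have [hin|hnin] := boolP (~~ b \in (gen_code g).2).
  exists (size (gen_code g).2), (size (gen_code g).2).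
  rewrite exponent_sum_abel_rep_out // mulr0 mulr0 addr0; split=> // m eta.
  by rewrite eF localize_out // has_prefix_nseq // leq_addr.
case: g hl hnin {eF} => s /letter_ok_nonconst /= hl hnin; last first.
  by move: hl hnin; case: b => /andP [hf ht] /=; rewrite ?hf ?ht.
have [k ->] : exists k, s = nseq k b.
  exists (size s); apply/all_pred1P/allP => c hc; apply/eqP.
  by case: c b hc hnin => -[] // ->.
rewrite exponent_sum_abel_rep_x all_nseq /= eqxx orbT {hl hnin}.
exists k.+2, (if b == e then k.+1 else k.+3); split.
  by case: b; case: e; rewrite /= ?expr0 ?expr1; lia.
move=> m eta; have -> : k.+2 + m = k + m.+2 by lia.
have -> : (if b == e then k.+1 else k.+3) + m = k + (if b == e then m.+1 else m.+3).
  by case: (b == e); lia.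
rewrite !prepend_nseq_add.
by case: e; rewrite /= localize_prepend ?xmap_nseq ?xinv_nseq; case: b.
Qed.

Lemma x_exponent_cons b l w :
  x_exponent b (l :: w) = (exponent_sum (GX [:: b]) (abel_letter l) + x_exponent b w)%R.
Proof. exact: exponent_sum_cat. Qed.

(* Sequences starting with a long run of [b]'s are those near [+oo] ([b = true])
   or [-oo] ([b = false]); there a word just lengthens or shortens the run. *)
Lemma word_germ b w : word_ok w -> exists N p : nat,
  (p%:Z = N%:Z + (-1) ^+ (~~ b) * x_exponent b w)%R /\
  forall m eta, word_eval w (prepend (nseq (N + m) b) eta) = prepend (nseq (p + m) b) eta.
Proof.
elim: w => [|l w IH]; first by exists 0, 0; rewrite /x_exponent /exponent_sum big_nil mulr0.
move=> /word_ok_cons [hl /IH [N [p [hp ew]]]].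
have [K [q [hq el]]] := letter_germ b hl.
exists (N + K), (q + p); split.
  by move: hp hq; rewrite x_exponent_cons mulrDr; lia.
by move=> m eta; rewrite word_eval_cons -addnA ew addnCA el addnA.
Qed.

(** * The real line *)

Lemma mobS n xi : mob n.+1 xi =
  let: (a, a', c, d) := mob n xi in
  if xi n then (a, a + a', c, c + d)%N else (a + a', a', c + d, d)%N.
Proof. by []. Qed.

Lemma mob_cons n b z : mob n.+1 (prepend [:: b] z) =
  let: (a, a', c, d) := mob n z in
  if b then (a + c, a' + d, c, d)%N else (a, a', a + c, a' + d)%N.
Proof.
elim: n => [|n IH]; first by case: b.
rewrite [LHS]mobS IH prepend_consS prepend_nil [mob n.+1 z]mobS.
by case: (mob n z) => [[[a a'] c] d]; case: (b); case: (z n); congr (_, _, _, _); lia.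
Qed.

Lemma mob_denom_gt0 n xi : (0 < (mob n xi).2)%N.
Proof.
elim: n => [//|n /=]; case: (mob n xi) => [[[a a'] c] d] /= IH.
by case: (xi n) => /=; lia.
Qed.

Section PhiValues.
Local Open Scope ring_scope.

Lemma phi_approx0 xi : phi_approx 0 xi = 0.
Proof. by rewrite /phi_approx /= mul0r. Qed.

Lemma phi_approx_cons1 n z : phi_approx n.+1 (prepend [:: true] z) = 1 + phi_approx n z.
Proof.
rewrite /phi_approx mob_cons; have := mob_denom_gt0 n z.
case: (mob n z) => [[[a a'] c] d] /= hd.
by rewrite natrD mulrDl divff ?pnatr_eq0 -?lt0n // addrC.
Qed.

Lemma phi_approx_cons0 n z : phi_approx n.+1 (prepend [:: false] z) <= 1.
Proof.
rewrite /phi_approx mob_cons; have := mob_denom_gt0 n z.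
case: (mob n z) => [[[a a'] c] d] /= hd.
by rewrite ler_pdivrMr ?mul1r ?ler_nat ?ltr0n; lia.
Qed.

Lemma phi_approx_zeros n : phi_approx n (fun _ => false) = 0.
Proof.
have : (mob n (fun _ => false)).1.1.2 = 0%N.
  by elim: n => [//|n /=]; case: (mob n _) => [[[a a'] c] d] /= ->.
by rewrite /phi_approx; case: (mob n _) => [[[a a'] c] d] /= ->; rewrite mul0r.
Qed.

Lemma phi_approx_ones j n :
  phi_approx n (prepend (nseq j true) (fun _ => false)) = (minn n j)%:R.
Proof.
elim: j n => [|j IH] [|n]; rewrite ?prepend_nil ?phi_approx_zeros ?phi_approx0 //.
by rewrite prepend_cons phi_approx_cons1 IH minnSS -natr1 addrC.
Qed.

Lemma phi_approx_le j xi : xi j = false -> forall n, phi_approx n xi <= j.+1%:R.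
Proof.
elim: j xi => [|j IH] xi hj [|n]; rewrite ?phi_approx0 ?ler0n //;
  rewrite -(prepend_shift1 xi); case: (xi 0%N) hj => //= hj.
- by apply: le_trans (phi_approx_cons0 _ _) _; rewrite ler1n.
- by rewrite phi_approx_cons1 -natr1 addrC lerD2r; exact: IH.
- by apply: le_trans (phi_approx_cons0 _ _) _; rewrite ler1n.
Qed.

Lemma phi_ge0 xi : (0 <= phi xi)%E.
Proof. by apply: le_trans (ereal_sup_ubound _) => //; exists 0%N; rewrite ?phi_approx0. Qed.

Lemma phi_le xi (c : R) : (forall n, phi_approx n xi <= c) -> (phi xi <= c%:E)%E.
Proof. by move=> h; apply: ge_ereal_sup => _ [n _ <-]; rewrite lee_fin. Qed.

Lemma phi_ones j : phi (prepend (nseq j true) (fun _ => false)) = (j%:R)%:E.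
Proof.
apply/le_anti/andP; split.
  by apply: phi_le => n; rewrite phi_approx_ones ler_nat geq_minr.
by apply: le_trans (ereal_sup_ubound _) => //; exists j; rewrite ?phi_approx_ones ?minnn.
Qed.

(* [fun n => xi n.+1 == b] is the tail of [xi], complemented when [b = false]. *)
Lemma PhiE b xi : xi 0%N = b ->
  Phi xi = if b then phi (fun n => xi n.+1 == b) else (- phi (fun n => xi n.+1 == b))%E.
Proof.
rewrite /Phi => ->; case: b; [congr phi|congr (- phi _)%E].
all: by apply: funext => n; rewrite /shift ?add1n; case: (xi n.+1).
Qed.

Lemma Phi_nseq b j :
  Phi (prepend (nseq j.+1 b) (fun _ => ~~ b)) = ((-1) ^+ (~~ b) * j%:R)%:E.
Proof.
rewrite (PhiE (b := b)) //.
have -> : (fun n => prepend (nseq j.+1 b) (fun _ => ~~ b) n.+1 == b) =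
    prepend (nseq j true) (fun _ => false).
  apply: funext => n; rewrite prepend_consS /prepend !size_nseq !nth_nseq.
  by case: (n < j)%N; rewrite ?eqxx //; case: b.
by rewrite phi_ones; case: b; rewrite /= ?mul1r ?mulN1r ?EFinN.
Qed.

Lemma Phi_abs_le b xi i : xi 0%N = b -> (0 < i)%N -> xi i = ~~ b ->
  (`|Phi xi| <= (i%:R)%:E)%E.
Proof.
move=> h0 hi hib; rewrite (PhiE h0).
have hle : (phi (fun n => xi n.+1 == b) <= (i%:R)%:E)%E.
  apply: phi_le; rewrite -(prednK hi); apply: phi_approx_le.
  by rewrite prednK // hib; case: (b).
by case: (b) hle => hle; rewrite ?abseN gee0_abs ?phi_ge0.
Qed.
End PhiValues.

(** * Compact support *)

Lemma word_fixes_run b N w :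
  (forall m eta,
     word_eval w (prepend (nseq (N + m) b) eta) = prepend (nseq (N + m) b) eta) ->
  forall xi, (forall i, i <= N -> xi i = b) -> word_eval w xi = xi.
Proof.
move=> hw xi hxi; rewrite (@prepend_shift_const xi (N + 1) b) ?hw // => i hi.
by apply: hxi; lia.
Qed.

Lemma compact_support_of_x_exponent w : word_ok w ->
  (forall b, x_exponent b w = 0%R) -> compact_support (word_eval w).
Proof.
move=> hw hx.
have germ b : exists N, forall m eta,
    word_eval w (prepend (nseq (N + m) b) eta) = prepend (nseq (N + m) b) eta.
  have [N [p [hp E]]] := word_germ b hw; exists N => m eta.
  by move: hp; rewrite hx mulr0 addr0 E => -[->].
have [[N0 E0] [N1 E1]] := (germ false, germ true).
exists (N0 + N1)%:R%R => xi hM.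
have run i : i <= N0 + N1 -> xi i = xi 0.
  case: i => [//|i] hi; apply/eqP; apply: contraTT hM => hne; rewrite -leNgt.
  apply: le_trans (Phi_abs_le (erefl (xi 0)) (ltn0Sn i) _) _.
    by case: (xi 0) (xi i.+1) hne => -[].
  by rewrite lee_fin ler_nat.
suff -> : word_eval w xi = xi by [].
case: (xi 0) run => run; [apply: (word_fixes_run E1)|apply: (word_fixes_run E0)].
all: by move=> i hi; apply: run; lia.
Qed.

Lemma x_exponent_of_compact_support w : word_ok w ->
  compact_support (word_eval w) -> forall b, x_exponent b w = 0%R.
Proof.
move=> hw [M hM] b; have [N [p [hp E]]] := word_germ b hw.
have [B hB] : exists B, (M < (N + B)%:R)%R.
  exists (Num.Def.archi_bound `|M|%R).
  apply: le_lt_trans (ler_norm M) _; apply: lt_le_trans (archi_boundP (normr_ge0 M)) _.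
  by rewrite ler_nat leq_addl.
have := hM (prepend (nseq (N + B).+1 b) (fun _ => ~~ b)).
rewrite Phi_nseq abse_EFin normrM normr_sign mul1r ger0_norm ?ler0n // lte_fin.
move=> /(_ hB); rewrite -addnS E addnS Phi_nseq.
move=> [] /(inv_inj (signrMK _)) /eqP; rewrite eqr_nat eqn_add2r => /eqP epN.
have /eqP : ((-1) ^+ (~~ b) * x_exponent b w = 0)%R by move: hp; rewrite epN; lia.
by rewrite mulf_eq0 signr_eq0 => /eqP.
Qed.

Theorem mainTheorem4 (g : Cantor -> Cantor) :
  inG0' g <->
  (inG0 g /\ compact_support g /\
   exists w : word, word_ok w /\ map_eq (word_eval w) g /\ y_exponent w = 0%R).
Proof.
rewrite inG0'E; split=> [[ps [hps ->]]|[_ [hc [w [hw [/map_eq_funext eg hy]]]]]].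
- have hw := comm_words_ok hps.
  have hx b : x_exponent b (comm_words ps) = 0%R := exponent_sum_abel_comm_words _ _.
  have hy : y_exponent (comm_words ps) = 0%R.
    by rewrite y_exponent_abel_word exponent_sum_abel_comm_words.
  split; first by exists (comm_words ps).
  split; first exact: compact_support_of_x_exponent hw hx.
  by exists (comm_words ps).
- subst g; have [c [hc' ->]] := eqmod_comm_abel_word hw.
  apply: comm_subgroup_comp hc'; apply: comm_subgroup_abel_word hy => b.
  exact: x_exponent_of_compact_support hw hc b.
Qed.
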